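(* Let $\kappa$ be an infinite cardinal of uncountable cofinality $\mathrm{cf}(\kappa)$. If a Banach space $X$ of density character $\kappa$ contains an isomorphic copy of $c_0(\kappa)$, then $X$ admits an equivalent norm for which it is $\mathrm{SQ}_{<\mathrm{cf}(\kappa)}$.
   Context: For a cardinal $\mu$, a Banach space $Z$ is $\mathrm{SQ}_{<\mu}$ if for every set $A\subset S_Z$ with $|A|<\mu$ there exists $y\in S_Z$ with $\|x\pm y\|\le 1$ for all $x\in A$. *)

From HB Require Import structures.
From mathcomp Require Import all_boot all_order all_algebra.
From mathcomp Require Import all_classical all_reals all_analysis.
Set Implicit Arguments. Unset Strict Implicit. Unset Printing Implicit Defensive.
Import Order.TTheory GRing.Theory Num.Theory.
Import numFieldNormedType.Exports.
Local Open Scope classical_set_scope.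
Local Open Scope ring_scope.
Local Open Scope card_scope.

(* The cardinal kappa is represented by a type K equipped with a strict
   well-order lt whose order type is the initial ordinal of kappa:
   every proper initial segment has cardinality strictly less than K. *)
Definition initial_ordinal (K : Type) (lt : K -> K -> Prop) : Prop :=
  [/\ well_founded lt,
      (forall x y z, lt x y -> lt y z -> lt x z),
      (forall x y, [\/ lt x y, x = y | lt y x]) &
      (forall k : K, ~ ([set: K] #<= [set j | lt j k]))].

Definition cofinal (K : Type) (lt : K -> K -> Prop) (C : set K) : Prop :=
  forall k, exists2 c, C c & ~ lt c k.

Definition uncountable_cofinality (K : Type) (lt : K -> K -> Prop) : Prop :=
  forall C : set K, cofinal lt C -> ~ countable C.

(* |A| < cf(kappa): since cf(kappa) is the least cardinality of a cofinal
   subset, this means no cofinal subset injects into A. *)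
Definition card_lt_cf (K : Type) (lt : K -> K -> Prop) (T : Type) (A : set T) : Prop :=
  forall C : set K, cofinal lt C -> ~ (C #<= A).

Definition density_char_eq (R : realType) (X : normedModType R) (K : Type) : Prop :=
  (exists2 D : set X, dense D & D #<= [set: K]) /\
  (forall D : set X, dense D -> [set: K] #<= D).

Definition in_c0 (R : realType) (K : Type) (f : K -> R) : Prop :=
  forall e : R, 0 < e -> finite_set [set k | e <= `|f k|].

(* X contains an isomorphic copy of c_0(K) (with the sup norm):
   a linear map T : c_0(K) -> X with c ||f||_oo <= ||T f|| <= C ||f||_oo. *)
Definition contains_c0 (R : realType) (X : normedModType R) (K : Type) : Prop :=
  exists (T : (K -> R) -> X) (c C : R), [/\ 0 < c, 0 < C,
    (forall (a : R) (f g : K -> R), in_c0 f -> in_c0 g ->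
        T (fun k => a * f k + g k) = a *: T f + T g),
    (forall (f : K -> R) (M : R), in_c0 f -> (forall k, `|f k| <= M) ->
        `|T f| <= C * M) &
    (forall (f : K -> R) (k : K), in_c0 f -> c * `|f k| <= `|T f|)].

Definition equivalent_norm (R : realType) (X : normedModType R) (N : X -> R) : Prop :=
  [/\ (forall x, N x = 0 -> x = 0),
      (forall (a : R) x, N (a *: x) = `|a| * N x),
      (forall x y, N (x + y) <= N x + N y) &
      exists a b : R, [/\ 0 < a, 0 < b &
        forall x, a * `|x| <= N x /\ N x <= b * `|x|]].

Definition SQ_lt_cf (R : realType) (X : normedModType R) (N : X -> R)
    (K : Type) (lt : K -> K -> Prop) : Prop :=
  forall A : set X, A `<=` [set x | N x = 1] -> card_lt_cf lt A ->
    exists2 y : X, N y = 1 &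
      forall x, A x -> N (x + y) <= 1 /\ N (x - y) <= 1.

From HB Require Import structures.
From mathcomp Require Import all_boot all_order all_algebra.
From mathcomp Require Import all_classical all_reals all_analysis.
From mathcomp Require Import ring lra.
From Stdlib Require Import ClassicalEpsilon.
Set Implicit Arguments. Unset Strict Implicit. Unset Printing Implicit Defensive.
Import Order.TTheory GRing.Theory Num.Theory.
Import numFieldNormedType.Exports.
Local Open Scope classical_set_scope.
Local Open Scope ring_scope.
Local Open Scope card_scope.

(* Let e_j = T 1_{j} be the copies of the unit vectors and V_g the span of the
   dense points of index < g.  Every x is a limit of points of some V_g, since the
   indices of a countable approximating sequence are bounded in kappa.  By a
   cardinality argument (Hessenberg's theorem below kappa), for every g some
   e_j, j = j(g), stays at distance >= c/8 from V_g + T{f | f j = 0}; let H_j be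
   the union of these subspaces over the g with j(g) = j, and Y the image under T
   of the vectors supported on the j(g).  The norm
     N x = sup (dist(x, Y), dist(x, H_j) / dist(e_j, H_j))
   is equivalent to the original one, and N e_j = 1.  If |A| < cf(kappa), then
   A lies in the closure of some V_g, hence of H_j for j = j(g), so translating
   x in A by +-e_j only affects the j-th term: N(x +- e_j) <= max(N x, 1) = 1. *)

Definition injects_into T U (A : set T) (B : set U) :=
  exists f : T -> U, (forall x, A x -> B (f x)) /\
    (forall x y, A x -> A y -> f x = f y -> x = y).

Lemma injects_into_card_le T U (A : set T) (B : set U) :
  injects_into A B -> A #<= B.
Proof.
case=> f [fAB finj]; apply/card_leP.
have [g] : $|{injfun A >-> B}|.
  apply/injfunPex; exists f; first by move=> x /fAB.
  by move=> x y; rewrite !inE => Ax Ay; apply: finj.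
by squash (sigLR g).
Qed.

Lemma card_le_injects_into T U (u0 : U) (A : set T) (B : set U) :
  A #<= B -> injects_into A B.
Proof.
move/card_leP => /injfunPex [g _ ginj].
exists (fun x => if pselect (A x) is left Ax then val (g (SigSub (mem_set Ax))) else u0).
split.
  move=> x Ax; case: pselect => // Ax'.
  by case: (g _) => /= b; rewrite inE.
move=> x y Ax Ay; case: pselect => // Ax'; case: pselect => // Ay' /val_inj.
move/ginj; rewrite !inE => /(_ I I) h.
by move: (congr1 val h).
Qed.

Lemma injects_into_trans T U W (A : set T) (B : set U) (C : set W) :
  injects_into A B -> injects_into B C -> injects_into A C.
Proof.
case=> f [fAB finj] [g [gBC ginj]]; exists (g \o f); split => /=.
  by move=> x /fAB /gBC.
by move=> x y Ax Ay /ginj gfxy; apply: finj => //; apply: gfxy; apply: fAB.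
Qed.

Lemma subset_injects_into T (A B : set T) : A `<=` B -> injects_into A B.
Proof. by move=> AB; exists id; split => // x /AB. Qed.

Lemma injects_into_refl T (A : set T) : injects_into A A.
Proof. exact: subset_injects_into. Qed.

Lemma injects_intoX T T' U U' (A : set T) (A' : set T') (B : set U) (B' : set U') :
  injects_into A B -> injects_into A' B' -> injects_into (A `*` A') (B `*` B').
Proof.
case=> f [fAB finj] [f' [fAB' finj']]; exists (fun p => (f p.1, f' p.2)); split.
  by move=> [x x'] [/= Ax Ax']; split; [apply: fAB|apply: fAB'].
move=> [x x'] [y y'] [/= Ax Ax'] [/= Ay Ay'] [/finj-/(_ Ax Ay) ->].
by move/finj' => /(_ Ax' Ay') ->.
Qed.

Lemma injects_into_finite T U (A : set T) (B : set U) :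
  injects_into A B -> finite_set B -> finite_set A.
Proof. by move/injects_into_card_le; apply: card_le_finite. Qed.

Lemma injects_into_nat T (A : set T) : infinite_set A ->
  exists2 g : nat -> T, forall n, A (g n) & injective g.
Proof.
move=> Ainf; have [a0 _] := infinite_setN0 Ainf.
move/infiniteP: Ainf => /(card_le_injects_into a0) [g [gA ginj]].
by exists g => [n|n m]; [apply: gA|apply: ginj].
Qed.

(* Hilbert's hotel: shift the copy of nat inside A by one to make room for a. *)
Lemma infinite_setU1_injects_into T (A : set T) (a : T) :
  infinite_set A -> injects_into (A `|` [set a]) A.
Proof.
move=> /injects_into_nat [g gA ginj].
pose shift x := match pselect (x = a) with
  | left _ => g 0%N
  | right _ => match pselect (exists n, x = g n) with
     | left e => g (projT1 (cid e)).+1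
     | right _ => x end end.
have shiftP x : [\/ x = a /\ shift x = g 0%N, exists n, x = g n /\ shift x = g n.+1 |
    [/\ x <> a, forall n, x <> g n & shift x = x]].
  rewrite /shift; case: pselect => [|xa]; first by constructor 1.
  case: pselect => [e|xg]; last by constructor 3; split => // n xgn; apply: xg; exists n.
  by constructor 2; case: (cid e) => n /= ->; exists n.
exists shift; split.
  move=> x Ax; have [[_ ->]|[n [_ ->]]|[xa _ ->]] := shiftP x => //.
  by case: Ax.
move=> x y _ _; have [[-> ->]|[n [-> ->]]|[xa xg ->]] := shiftP x;
  have [[-> ->]|[m [-> ->]]|[ya yg ->]] := shiftP y => //.
- by move/ginj.
- by move=> y0; case: (yg 0%N).
- by move/ginj.
- by move/ginj => [->].
- by move=> yn; case: (yg n.+1).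
- by move/xg.
- by move/xg.
Qed.

Lemma finite_fibres_injects_into T U (A : set T) (B : set U) (f : T -> U) :
  (forall x, A x -> B (f x)) -> (forall u, finite_set [set x | A x /\ f x = u]) ->
  injects_into A (B `*` [set: nat]).
Proof.
move=> fAB fin.
have [idx idxP] : exists idx : U -> T -> nat, forall u x y,
    A x -> A y -> f x = u -> f y = u -> idx u x = idx u y -> x = y.
  apply: (choice (fun u h => forall x y,
    A x -> A y -> f x = u -> f y = u -> h x = h y -> x = y)) => u.
  have /finite_set_leP [n /(card_le_injects_into 0%N) [h [_ hinj]]] := fin u.
  by exists h => x y Ax Ay fx fy; apply: hinj.
exists (fun x => (f x, idx (f x) x)); split => [x Ax|x y Ax Ay [fxy]].
  by split => //; apply: fAB.
by rewrite fxy; apply: idxP.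
Qed.

Definition seqs T (A : set T) : set (seq T) := [set s | List.Forall A s].

Lemma seqs_cons T (A : set T) x s : seqs A (x :: s) <-> A x /\ seqs A s.
Proof. exact: List.Forall_cons_iff. Qed.

Lemma injects_into_seqs T U (A : set T) (B : set U) :
  injects_into A B -> injects_into (seqs A) (seqs B).
Proof.
case=> f [fAB finj]; exists (map f); split.
  by move=> s As; apply/List.Forall_map; apply: List.Forall_impl As.
elim=> [|x s IH] [|y t] //= /seqs_cons [Ax As] /seqs_cons [Ay At] [fxy fst].
by rewrite (finj _ _ Ax Ay fxy) (IH _ As At fst).
Qed.

(* A sequence is coded by its length and the iterated pairing of its entries. *)
Lemma seqs_injects_into T (B : set T) :
  infinite_set B -> injects_into (B `*` B) B -> injects_into (seqs B) B.
Proof.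
move=> Binf [pair [pairB pairI]].
have {}pairI a b c d : B a -> B b -> B c -> B d -> pair (a, b) = pair (c, d) ->
    a = c /\ b = d.
  by move=> Ba Bb Bc Bd /pairI => /(_ (conj Ba Bb) (conj Bc Bd)) [-> ->].
have [n2b n2bB n2bI] := injects_into_nat Binf.
pose fold := foldr (fun x acc => pair (x, acc)) (n2b 0%N).
have foldB s : seqs B s -> B (fold s).
  by elim: s => [|x s IH] //= /seqs_cons [Bx Bs]; apply: pairB; split => //; apply: IH.
have foldI s t : seqs B s -> seqs B t -> size s = size t -> fold s = fold t -> s = t.
  elim: s t => [|x s IH] [|y t] //= /seqs_cons [Bx Bs] /seqs_cons [By Bt] [st].
  by move/pairI => /(_ Bx (foldB _ Bs) By (foldB _ Bt)) [-> /IH ->].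
exists (fun s => pair (n2b (size s), fold s)); split.
  by move=> s Bs; apply: pairB; split; [apply: n2bB|apply: foldB].
move=> s t Bs Bt /(pairI _ _ _ _ (n2bB _) (foldB _ Bs) (n2bB _) (foldB _ Bt)).
by case=> /n2bI; apply: foldI.
Qed.

Section GreedyInjection.
Variables (P V : Type) (r : P -> P -> Prop) (S : set P) (B : set V) (v0 : V).
Hypothesis r_wf : well_founded r.
Hypothesis r_total : forall p q, p <> q -> r p q \/ r q p.
Hypothesis B_large : forall p, S p -> ~ injects_into B [set q | r q p].

(* Send each p to an element of B avoiding the values at all r-predecessors;
   such an element exists since otherwise B injects into the predecessors. *)
Lemma greedy_injects_into : injects_into S B.
Proof.
pose fresh_for (f : P -> V) p v := B v /\ forall q, r q p -> f q <> v.
pose fresh p (rec : forall q, r q p -> V) :=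
  epsilon (inhabits v0) (fun v => B v /\ forall q (rqp : r q p), rec q rqp <> v).
pose f := Fix r_wf (fun _ => V) fresh.
have fE p : f p = epsilon (inhabits v0) (fresh_for f p).
  rewrite /f Fix_eq // => p' g1 g2 g12.
  suff -> : g1 = g2 by [].
  by apply: functional_extensionality_dep => q; apply: functional_extensionality_dep.
have fP p : S p -> fresh_for f p (f p).
  move=> Sp; rewrite [in X in fresh_for _ _ X]fE; apply: epsilon_spec.
  apply: contrapT => no_fresh; apply: (B_large Sp).
  have [pre preP] : exists pre : V -> P, forall v, B v -> r (pre v) p /\ f (pre v) = v.
    apply: (choice (fun v q => B v -> r q p /\ f q = v)) => v.
    have [Bv|] := pselect (B v); last by exists p.
    apply: contrapT => nopre; apply: no_fresh; exists v; split => // q rqp fqv.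
    by apply: nopre; exists q.
  exists pre; split; first by move=> v /preP[].
  by move=> v w Bv Bw pvw; rewrite -(preP v Bv).2 -(preP w Bw).2 pvw.
exists f; split; first by move=> p /fP[].
move=> p q Sp Sq fpq; apply: contrapT => /r_total [rpq|rqp].
  exact: (fP q Sq).2 p rpq fpq.
exact: (fP p Sp).2 q rqp (esym fpq).
Qed.

End GreedyInjection.

Lemma not_cofinal_bounded K (lt : K -> K -> Prop) (A : set K) :
  ~ cofinal lt A -> exists k, forall a, A a -> lt a k.
Proof.
move=> ncof; apply: contrapT => nbound; apply: ncof => k.
apply: contrapT => nabove; apply: nbound; exists k => a Aa.
by apply: contrapT => nlt; apply: nabove; exists a.
Qed.

Lemma countable_bounded K (lt : K -> K -> Prop) (A : set K) :
  uncountable_cofinality lt -> countable A -> exists k, forall a, A a -> lt a k.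
Proof. by move=> uncf Acount; apply: not_cofinal_bounded => /uncf. Qed.

Lemma card_lt_cf_bounded K (lt : K -> K -> Prop) T (A : set T) (f : T -> K) :
  card_lt_cf lt A -> exists k, forall x, A x -> lt (f x) k.
Proof.
move=> Asmall; have [k kP] : exists k, forall y, (f @` A) y -> lt y k.
  by apply: not_cofinal_bounded => /Asmall; apply; exact: card_image_le.
by exists k => x Ax; apply: kP; exists x.
Qed.

Section WellOrder.
Variables (K : Type) (lt : K -> K -> Prop).
Hypothesis lt_wf : well_founded lt.
Hypothesis lt_transitive : forall x y z, lt x y -> lt y z -> lt x z.
Hypothesis lt_trichotomy : forall x y, [\/ lt x y, x = y | lt y x].

Definition seg k := [set j | lt j k].
Definition segc k := seg k `|` [set k].

Definition pmax (p : K * K) := if `[< lt p.1 p.2 >] then p.2 else p.1.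

Lemma pmax_eq p : pmax p = p.1 \/ pmax p = p.2.
Proof. by rewrite /pmax; case: asboolP; [right|left]. Qed.

Lemma segc_pmax p : segc (pmax p) p.1 /\ segc (pmax p) p.2.
Proof.
case: p => a b; rewrite /pmax /segc /=; case: asboolP => [lab|nlab].
  by split; [left|right].
split; first by right.
by have [//|->|lba] := lt_trichotomy a b; [right|left].
Qed.

Definition godel_lt (p q : K * K) := lt (pmax p) (pmax q) \/
  (pmax p = pmax q /\ (lt p.1 q.1 \/ (p.1 = q.1 /\ lt p.2 q.2))).

Lemma godel_lt_wf : well_founded godel_lt.
Proof.
suff accP m p : pmax p = m -> Acc godel_lt p by move=> p; exact: accP _ p erefl.
elim/(well_founded_ind lt_wf): m p => m IHm [a b].
elim/(well_founded_ind lt_wf): a b => a IHa b.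
elim/(well_founded_ind lt_wf): b => b IHb pm; constructor => -[a' b'] [|[e [|[]]]] /=.
- by rewrite pm => /IHm; apply.
- by move=> la; apply: IHa => //; rewrite e.
- by move=> ea lb; subst a'; apply: IHb => //; rewrite e.
Qed.

Lemma godel_lt_total p q : p <> q -> godel_lt p q \/ godel_lt q p.
Proof.
case: p q => [a b] [a' b'] ne; rewrite /godel_lt /=.
have [lm|em|lm] := lt_trichotomy (pmax (a, b)) (pmax (a', b')).
- by left; left.
- have [la|ea|la] := lt_trichotomy a a'.
  + by left; right; split => //; left.
  + subst a'; have [lb|eb|lb] := lt_trichotomy b b'.
    * by left; right; split => //; right.
    * by case: ne; rewrite eb.
    * by right; right; split => //; right.
  + by right; right; split => //; left.
- by right; left.
Qed.

Lemma godel_lt_segc p q : godel_lt q p -> (segc (pmax p) `*` segc (pmax p)) q.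
Proof.
move=> gqp; have [q1 q2] := segc_pmax q.
have sub : segc (pmax q) `<=` segc (pmax p).
  case: gqp => [lqp|[-> _]] // z [lzq|->]; left => //.
  exact: lt_transitive lzq lqp.
by split; apply: sub.
Qed.

(* Hessenberg: unless seg k is as large as a smaller segment (induction), each
   pair below k has fewer than |seg k| predecessors in Goedel's order, so the
   greedy construction applies. *)
Lemma seg_square_injects_into k :
  infinite_set (seg k) -> injects_into (seg k `*` seg k) (seg k).
Proof.
elim/(well_founded_ind lt_wf): k => k IH kinf.
have [[k' [lk' kk']]|kmin] :=
  pselect (exists k', lt k' k /\ injects_into (seg k) (seg k')).
  have k'inf : infinite_set (seg k') by move/(injects_into_finite kk').
  apply: injects_into_trans (injects_intoX kk' kk') _.
  apply: injects_into_trans (IH _ lk' k'inf) (subset_injects_into _).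
  by move=> j /= ljk'; apply: lt_transitive ljk' lk'.
apply: (greedy_injects_into k godel_lt_wf godel_lt_total) => p [p1 p2] below.
have lpk : lt (pmax p) k by case: (pmax_eq p) => ->.
have {}below : injects_into (seg k) (segc (pmax p) `*` segc (pmax p)).
  exact: injects_into_trans below (subset_injects_into (@godel_lt_segc p)).
have [fin|inf] := pselect (finite_set (seg (pmax p))).
  apply: kinf; apply: injects_into_finite below _.
  by apply: finite_setX; rewrite finite_setU; split=> //; exact: finite_set1.
apply: kmin; exists (pmax p); split => //.
apply: injects_into_trans below _.
apply: injects_into_trans (IH _ lpk inf).
by apply: injects_intoX; apply: infinite_setU1_injects_into.
Qed.

Hypothesis lt_initial : forall k : K, ~ ([set: K] #<= seg k).
Hypothesis K_infinite : infinite_set [set: K].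
Hypothesis lt_uncountable_cf : uncountable_cofinality lt.

Lemma exists_infinite_seg_above g : exists k, infinite_set (seg k) /\ seg g `<=` seg k.
Proof.
have [n2k _ n2kI] := injects_into_nat K_infinite.
have [k0 k0P] := countable_bounded lt_uncountable_cf (card_image_le n2k setT).
have k0inf : infinite_set (seg k0).
  apply/infiniteP/injects_into_card_le; exists n2k; split => [n _|n m _ _ /n2kI //].
  by apply: k0P; exists n.
have [lgk0|->|lk0g] := lt_trichotomy g k0.
- by exists k0; split => // j /= ljg; apply: lt_transitive ljg lgk0.
- by exists k0; split.
- exists g; split => //; apply: contra_not k0inf; apply: sub_finite_set => j /= ljk0.
  exact: lt_transitive ljk0 lk0g.
Qed.

Lemma seg_seqs_small g :
  ~ injects_into [set: K] (seqs (seg g `*` [set: rat]) `*` [set: nat]).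
Proof.
have [k [kinf gk]] := exists_infinite_seg_above g.
have sq := seg_square_injects_into kinf.
have natk : injects_into [set: nat] (seg k).
  by move/infiniteP: kinf => /(card_le_injects_into k).
have ratk : injects_into [set: rat] (seg k).
  apply: injects_into_trans natk; exists pickle; split => // x y _ _.
  exact: (pcan_inj (@pickleK rat)).
move=> Kinj; apply: (@lt_initial k); apply: injects_into_card_le.
apply: (injects_into_trans Kinj); apply: (injects_into_trans _ sq).
apply: injects_intoX natk; apply: injects_into_trans (seqs_injects_into kinf sq).
apply: injects_into_seqs; apply: injects_into_trans sq.
by apply: injects_intoX ratk; apply: subset_injects_into.
Qed.

End WellOrder.

Lemma mulr_divD1_le (R : realFieldType) (a e : R) :
  0 <= a -> 0 <= e -> a * (e / (a + 1)) <= e.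
Proof.
move=> a_ge0 e_ge0; rewrite mulrCA ler_piMr // ler_pdivrMr ?mul1r ?lerDl //.
by rewrite ltr_wpDl.
Qed.

Section SetDistance.
Variables (R : realType) (X : normedModType R).

Lemma homogeneous_of_le (f : X -> R) : (forall x, 0 <= f x) ->
  (forall (a : R) x, f (a *: x) <= `|a| * f x) ->
  forall (a : R) x, f (a *: x) = `|a| * f x.
Proof.
move=> f_ge0 fZ a x; apply/eqP; rewrite eq_le fZ /=.
have [->|a0] := eqVneq a 0; first by rewrite normr0 mul0r.
have := fZ a^-1 (a *: x); rewrite scalerA mulVf // scale1r.
by rewrite normfV ler_pdivlMl ?normr_gt0.
Qed.

Definition linear_subspace (S : set X) := [/\ S 0,
  (forall x y, S x -> S y -> S (x + y)) & (forall (a : R) x, S x -> S (a *: x))].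

Definition set_dist (x : X) (S : set X) : R := inf [set `|x - s| | s in S].

Variable S : set X.
Hypothesis S0 : S 0.

Let dists_has_inf x : has_inf [set `|x - s| | s in S].
Proof. by split; [exists `|x - 0|, 0 | exists 0 => _ [s _ <-]]. Qed.

Lemma set_dist_ge0 x : 0 <= set_dist x S.
Proof. by apply: lb_le_inf => [|_ [s _ <-]]; first by case: (dists_has_inf x). Qed.

Lemma set_dist_le x s : S s -> set_dist x S <= `|x - s|.
Proof. by move=> Ss; apply: (ge_inf (dists_has_inf x).2); exists s. Qed.

Lemma set_dist_approx x eps : 0 < eps ->
  exists2 s, S s & `|x - s| < set_dist x S + eps.
Proof.
by move=> eps_gt0; have [_ [s Ss <-]] := inf_adherent eps_gt0 (dists_has_inf x); exists s.
Qed.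

Lemma le_set_dist x b : (forall s, S s -> b <= `|x - s|) -> b <= set_dist x S.
Proof.
by move=> lb; apply: lb_le_inf => [|_ [s Ss <-]]; [case: (dists_has_inf x)|apply: lb].
Qed.

Lemma set_dist_le_norm x : set_dist x S <= `|x|.
Proof. by have := set_dist_le x S0; rewrite subr0. Qed.

Lemma set_dist_eq0 x : (forall eps, 0 < eps -> exists2 s, S s & `|x - s| < eps) ->
  set_dist x S = 0.
Proof.
move=> approx; apply/eqP; rewrite eq_le set_dist_ge0 andbT.
apply/ler_addgt0Pr => eps /approx [s Ss xs]; rewrite add0r.
exact: le_trans (set_dist_le x Ss) (ltW xs).
Qed.

Lemma set_dist_mem s : S s -> set_dist s S = 0.
Proof.
by move=> Ss; apply: set_dist_eq0 => eps eps_gt0; exists s; rewrite ?subrr ?normr0.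
Qed.

Hypothesis S_subspace : linear_subspace S.

Lemma set_distD x y : set_dist (x + y) S <= set_dist x S + set_dist y S.
Proof.
case: S_subspace => _ SD _; apply/ler_addgt0Pr => e e_gt0.
have e2_gt0 : 0 < e / 2 by rewrite divr_gt0.
have [s1 S1 xs1] := set_dist_approx x e2_gt0.
have [s2 S2 ys2] := set_dist_approx y e2_gt0.
apply: le_trans (set_dist_le _ (SD _ _ S1 S2)) _.
rewrite opprD addrACA (splitr e) [in X in _ <= X]addrACA.
by apply: le_trans (ler_normD _ _) _; apply: lerD; apply: ltW.
Qed.

Lemma set_distZ (a : R) x : set_dist (a *: x) S = `|a| * set_dist x S.
Proof.
apply: (@homogeneous_of_le (set_dist^~ S)) => [{}x|{}a {}x]; first exact: set_dist_ge0.
case: S_subspace => _ _ SZ; apply/ler_addgt0Pr => e e_gt0.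
have ea_gt0 : 0 < e / (`|a| + 1) by rewrite divr_gt0 // ltr_wpDl.
have [s Ss xs] := set_dist_approx x ea_gt0.
apply: le_trans (set_dist_le _ (SZ a _ Ss)) _.
rewrite -scalerBr normrZ.
apply: le_trans (ler_wpM2l (normr_ge0 a) (ltW xs)) _.
by rewrite mulrDr lerD2l mulr_divD1_le // ltW.
Qed.

Lemma set_dist_shift x s : S s -> set_dist (x + s) S = set_dist x S.
Proof.
move=> Ss; apply/eqP; rewrite eq_le.
have := set_distD x s; rewrite (set_dist_mem Ss) addr0 => -> /=.
have := set_distD (x + s) ((-1) *: s).
by rewrite set_distZ (set_dist_mem Ss) mulr0 addr0 scaleN1r addrK.
Qed.

End SetDistance.

Section LinearCombinations.
Variables (R : realType) (X : normedModType R).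

Definition lincomb (l : seq (X * R)) : X := \sum_(p <- l) p.2 *: p.1.

Definition ratcomb (l : seq (X * rat)) : X := lincomb [seq (p.1, ratr p.2) | p <- l].

Lemma ratcomb_approx (A : set X) l eps : 0 < eps -> seqs (A `*` [set: R]) l ->
  exists2 l' : seq (X * rat), seqs (A `*` [set: rat]) l' & `|lincomb l - ratcomb l'| < eps.
Proof.
elim: l eps => [|[d a] l IH] eps eps_gt0.
  by exists [::] => //; rewrite /ratcomb /lincomb !big_nil subr0 normr0.
move=> /seqs_cons [[Ad _] Al].
have eps2_gt0 : 0 < eps / 2 by rewrite divr_gt0.
have [l' Al' ll'] := IH _ eps2_gt0 Al.
have : a - eps / 2 / (`|d| + 1) < a + eps / 2 / (`|d| + 1).
  by rewrite ltrD2l gtrN // divr_gt0 // ltr_wpDl.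
move=> /rat_in_itvoo [q]; rewrite in_itv /= -ltr_distlC => aq.
exists ((d, q) :: l'); first by apply/seqs_cons.
rewrite /ratcomb /lincomb /= !big_cons /= -/(lincomb l) -/(lincomb _) -/(ratcomb l').
rewrite opprD addrACA -scalerBl (splitr eps).
apply: le_lt_trans (ler_normD _ _) _; apply: ler_ltD => //.
rewrite normrZ mulrC; apply: le_trans (mulr_divD1_le (normr_ge0 d) (ltW eps2_gt0)).
by rewrite ler_wpM2l // ltW.
Qed.

End LinearCombinations.

Section C0.
Variables (R : realType) (K : Type).

Lemma indic1_id (j : K) : \1_[set j] j = 1 :> R.
Proof. by rewrite indicE mem_set. Qed.

Lemma indic1_neq (j i : K) : i <> j -> \1_[set j] i = 0 :> R.
Proof. by move=> ij; rewrite indicE memNset. Qed.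

Lemma in_c0_lin (a : R) (f g : K -> R) :
  in_c0 f -> in_c0 g -> in_c0 (fun k => a * f k + g k).
Proof.
move=> f_c0 g_c0 e e_gt0; have e2_ge0 : 0 <= e / 2 by rewrite divr_ge0 // ltW.
apply: (@sub_finite_set _ _
  ([set k | e / 2 / (`|a| + 1) <= `|f k|] `|` [set k | e / 2 <= `|g k|])); last first.
  by rewrite finite_setU; split; [apply: f_c0|apply: g_c0];
    rewrite ?divr_gt0 ?ltr_wpDl.
move=> k /= afg_ge; apply: contrapT => /not_orP[/negP + /negP].
rewrite -!ltNge => fk gk; move: afg_ge; apply/negP; rewrite -ltNge.
apply: le_lt_trans (ler_normD _ _) _; rewrite normrM (splitr e).
apply: ler_ltD gk; apply: le_trans (mulr_divD1_le (normr_ge0 a) e2_ge0).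
by rewrite ler_wpM2l // ltW.
Qed.

Lemma in_c0_0 : in_c0 (fun _ : K => 0 : R).
Proof.
move=> e e_gt0; apply: (@sub_finite_set _ _ set0); last exact: finite_set0.
by move=> k /=; rewrite normr0 leNgt e_gt0.
Qed.

Lemma in_c0_indic1 (j : K) : in_c0 (\1_[set j] : K -> R).
Proof.
move=> e e_gt0; apply: (@sub_finite_set _ _ [set j]); last exact: finite_set1.
move=> k /=; have [//|kj] := pselect (k = j).
by rewrite indic1_neq // normr0 leNgt e_gt0.
Qed.

Lemma in_c0D (f g : K -> R) : in_c0 f -> in_c0 g -> in_c0 (fun k => f k + g k).
Proof.
by move=> f_c0 g_c0; have := in_c0_lin 1 f_c0 g_c0; under eq_fun do rewrite mul1r.
Qed.

Lemma in_c0Z (a : R) (f : K -> R) : in_c0 f -> in_c0 (fun k => a * f k).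
Proof.
by move=> f_c0; have := in_c0_lin a f_c0 in_c0_0; under eq_fun do rewrite addr0.
Qed.

Lemma in_c0B (f g : K -> R) : in_c0 f -> in_c0 g -> in_c0 (fun k => f k - g k).
Proof.
move=> f_c0 g_c0; have := in_c0_lin (-1) g_c0 f_c0.
by under eq_fun do rewrite mulN1r addrC.
Qed.

End C0.
Arguments in_c0_0 {R K}.

Section C0Operator.
Variables (R : realType) (K : Type) (X : normedModType R) (T : (K -> R) -> X).
Hypothesis T_lin : forall (a : R) (f g : K -> R), in_c0 f -> in_c0 g ->
  T (fun k => a * f k + g k) = a *: T f + T g.

Lemma T0 : T (fun _ => 0) = 0.
Proof.
have := T_lin 1 in_c0_0 in_c0_0; under eq_fun do rewrite mulr0 addr0.
by rewrite scale1r => /eqP; rewrite -subr_eq subrr eq_sym => /eqP.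
Qed.

Lemma TD (f g : K -> R) : in_c0 f -> in_c0 g -> T (fun k => f k + g k) = T f + T g.
Proof.
move=> f_c0 g_c0; have := T_lin 1 f_c0 g_c0.
by under eq_fun do rewrite mul1r; rewrite scale1r.
Qed.

Lemma TZ (a : R) (f : K -> R) : in_c0 f -> T (fun k => a * f k) = a *: T f.
Proof.
move=> f_c0; have := T_lin a f_c0 in_c0_0; under eq_fun do rewrite addr0.
by rewrite T0 addr0.
Qed.

Lemma TB (f g : K -> R) : in_c0 f -> in_c0 g -> T (fun k => f k - g k) = T f - T g.
Proof.
move=> f_c0 g_c0; have := T_lin (-1) g_c0 f_c0; under eq_fun do rewrite mulN1r addrC.
by rewrite scaleN1r addrC.
Qed.

Variable c : R.
Hypothesis T_ge : forall (f : K -> R) (k : K), in_c0 f -> c * `|f k| <= `|T f|.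
Hypothesis c_gt0 : 0 < c.

(* Apply the lower bound to (1_j - F) - (1_j' - F'), whose j-th coordinate
   is 1 + F' j. *)
Lemma c0_coord_separation j j' (v : X) (F F' : K -> R) :
  j <> j' -> in_c0 F -> in_c0 F' -> F j = 0 ->
  `|T \1_[set j] - v - T F| < c / 4 -> `|T \1_[set j'] - v - T F'| < c / 4 ->
  1 / 2 <= `|F' j|.
Proof.
move=> jj' F_c0 F'_c0 Fj close close'.
have c1 : in_c0 (\1_[set j] : K -> R) := in_c0_indic1 j.
have c2 : in_c0 (\1_[set j'] : K -> R) := in_c0_indic1 j'.
have [c3 c4] := (in_c0B c1 F_c0, in_c0B c2 F'_c0).
pose h i := (\1_[set j] i - F i) - (\1_[set j'] i - F' i).
have hj : h j = 1 + F' j by rewrite /h indic1_id indic1_neq // Fj !subr0 sub0r opprK.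
have Th : T h = (T \1_[set j] - v - T F) - (T \1_[set j'] - v - T F').
  rewrite /h !TB //.
  by rewrite [_ - v - T F]addrAC [_ - v - T F']addrAC [in RHS]opprB [in RHS]addrA subrK.
have : c * `|1 + F' j| < c * (1 / 2).
  rewrite -hj; apply: le_lt_trans (T_ge _ (in_c0B c3 c4)) _.
  rewrite Th; apply: le_lt_trans (ler_normB _ _) _.
  have -> : c * (1 / 2) = c / 4 + c / 4 by field.
  exact: ltrD.
rewrite ltr_pM2l // => small; have := ler_normB (1 + F' j) (F' j).
rewrite addrK normr1; lra.
Qed.

End C0Operator.

Section Renorming.
Variables (R : realType) (K : Type) (lt : K -> K -> Prop) (X : normedModType R).
Hypothesis lt_wf : well_founded lt.
Hypothesis lt_transitive : forall x y z, lt x y -> lt y z -> lt x z.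
Hypothesis lt_trichotomy : forall x y, [\/ lt x y, x = y | lt y x].
Hypothesis lt_initial : forall k : K, ~ ([set: K] #<= seg lt k).
Hypothesis K_infinite : infinite_set [set: K].
Hypothesis lt_uncountable_cf : uncountable_cofinality lt.
Variables (T : (K -> R) -> X) (c C : R).
Hypothesis c_gt0 : 0 < c.
Hypothesis C_gt0 : 0 < C.
Hypothesis T_lin : forall (a : R) (f g : K -> R), in_c0 f -> in_c0 g ->
  T (fun k => a * f k + g k) = a *: T f + T g.
Hypothesis T_le : forall (f : K -> R) (M : R), in_c0 f -> (forall k, `|f k| <= M) ->
  `|T f| <= C * M.
Hypothesis T_ge : forall (f : K -> R) (k : K), in_c0 f -> c * `|f k| <= `|T f|.
Variables (D : set X) (iota : X -> K).
Hypothesis D_dense : dense D.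
Hypothesis iota_inj : forall x y, D x -> D y -> iota x = iota y -> x = y.

Local Notation e j := (T \1_[set j]).

Definition dense_below g := [set d | D d /\ lt (iota d) g].

Definition span_below g := [set lincomb l | l in seqs (dense_below g `*` [set: R])].

Lemma span_below_mono g1 g2 : lt g1 g2 -> span_below g1 `<=` span_below g2.
Proof.
move=> lg12 _ [l l1 <-]; exists l => //; apply: List.Forall_impl l1.
by move=> [d a] [[Dd ld] _]; do 2?split => //; apply: lt_transitive ld lg12.
Qed.

Lemma span_below_subspace g : linear_subspace (span_below g).
Proof.
split.
- by exists [::]; [exact: List.Forall_nil|rewrite /lincomb big_nil].
- move=> _ _ [l1 l1g <-] [l2 l2g <-]; exists (l1 ++ l2).
    exact/List.Forall_app.
  by rewrite /lincomb big_cat.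
- move=> a _ [l lg <-]; exists [seq (p.1, a * p.2) | p <- l].
    by apply/List.Forall_map; apply: List.Forall_impl lg => p [].
  by rewrite /lincomb big_map scaler_sumr; apply: eq_bigr => p _; rewrite scalerA.
Qed.

Lemma dense_below_span g d : dense_below g d -> span_below g d.
Proof.
move=> dg; exists [:: (d, 1)]; first by apply/seqs_cons; split; [split|constructor].
by rewrite /lincomb big_seq1 scale1r.
Qed.

Lemma dense_approx x eps : 0 < eps -> exists2 d, D d & `|x - d| < eps.
Proof.
move=> eps_gt0; have [|d [xd Dd]] := D_dense _ (ball_open x eps).
  by exists x; apply: ballxx.
by exists d => //; move: xd; rewrite -ball_normE.
Qed.

(* The countably many indices of an approximating sequence are bounded. *)
Lemma approx_span_below x :
  exists g, forall eps, 0 < eps -> exists2 v, span_below g v & `|x - v| < eps.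
Proof.
have [d dP] : exists d : nat -> X, forall n, D (d n) /\ `|x - d n| < n.+1%:R^-1.
  apply: (choice (fun n y => D y /\ `|x - y| < n.+1%:R^-1)) => n.
  have n_gt0 : 0 < n.+1%:R^-1 :> R by rewrite invr_gt0 ltr0n.
  by have [y Dy xy] := dense_approx x n_gt0; exists y.
have [g gP] := countable_bounded lt_uncountable_cf (card_image_le (iota \o d) setT).
exists g => eps eps_gt0; have [n neps] := ltr_add_invr eps_gt0; rewrite add0r in neps.
exists (d n); last exact: lt_trans (dP n).2 neps.
by apply: dense_below_span; split; [exact: (dP n).1|apply: gP; exists n].
Qed.

(* Twice [delta] is the separation radius [c / 4] of [c0_coord_separation]. *)
Definition delta := c / 8.

Lemma delta_gt0 : 0 < delta.
Proof. by rewrite divr_gt0. Qed.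

Lemma dense_below_injects_into g : injects_into (dense_below g) (seg lt g).
Proof.
exists iota; split; first by move=> d [].
by move=> d d' [Dd _] [Dd' _]; apply: iota_inj.
Qed.

Definition near_code g j (lF : seq (X * rat) * (K -> R)) :=
  [/\ seqs (dense_below g `*` [set: rat]) lF.1, in_c0 lF.2, lF.2 j = 0 &
      `|e j - ratcomb lF.1 - T lF.2| < c / 4].

Lemma exists_near_code g j v f : span_below g v -> in_c0 f -> f j = 0 ->
  `|e j - v - T f| < delta -> exists lF, near_code g j lF.
Proof.
move=> [l lg <-] f_c0 fj near.
have [l' l'g ll'] := ratcomb_approx delta_gt0 lg.
exists (l', f); split => //=.
rewrite addrAC; apply: le_lt_trans (ler_distD (lincomb l) _ _) _.
have -> : c / 4 = delta + delta by rewrite /delta; field.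
by apply: ltrD => //; rewrite addrAC.
Qed.

Lemma near_code_fibres_finite g (LF : K -> seq (X * rat) * (K -> R)) :
  (forall j, near_code g j (LF j)) ->
  forall l, finite_set [set j | setT j /\ (LF j).1 = l].
Proof.
move=> LFP l; have [[j0 j0l]|nol] := pselect (exists j0, (LF j0).1 = l); last first.
  apply: (@sub_finite_set _ _ set0); last exact: finite_set0.
  by move=> j [_ jl]; apply: nol; exists j.
have [_ F0_c0 _ near0] := LFP j0.
apply: (@sub_finite_set _ _ ([set j0] `|` [set j | 1 / 2 <= `|(LF j0).2 j|])).
  move=> j [_ jl]; have [->|jj0] := pselect (j = j0); [by left|right].
  have [_ F_c0 Fj nearj] := LFP j.
  apply: (c0_coord_separation T_lin T_ge c_gt0 jj0 F_c0 F0_c0 Fj nearj).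
  by rewrite jl -j0l.
by rewrite finite_setU; split; [exact: finite_set1|apply: F0_c0; rewrite divr_gt0].
Qed.

(* Otherwise every j has a near code, and j |-> code has finite fibres, so K
   would inject into a set of codes of size < |K|. *)
Lemma exists_far_coord g : exists j, forall v f,
  span_below g v -> in_c0 f -> f j = 0 -> delta <= `|e j - v - T f|.
Proof.
apply: contrapT => nofar.
have [LF LFP] : exists LF, forall j, near_code g j (LF j).
  apply: choice => j; apply: contrapT => nocode; apply: nofar.
  exists j => v f gv f_c0 fj; rewrite leNgt; apply/negP.
  by move=> /(exists_near_code gv f_c0 fj); exact: nocode.
have codes j : setT j -> seqs (dense_below g `*` [set: rat]) (LF j).1.
  by case: (LFP j).
have Kinj := finite_fibres_injects_into codes (near_code_fibres_finite LFP).
apply: (seg_seqs_small lt_wf lt_transitive lt_trichotomy lt_initial K_infinite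
  lt_uncountable_cf); apply: (injects_into_trans Kinj).
apply: injects_intoX (injects_into_refl _); apply: injects_into_seqs.
exact: injects_intoX (dense_below_injects_into g) (injects_into_refl _).
Qed.

Definition far_coord g : K := projT1 (cid (exists_far_coord g)).

Lemma far_coordP g v f : span_below g v -> in_c0 f -> f (far_coord g) = 0 ->
  delta <= `|e (far_coord g) - v - T f|.
Proof. exact: (projT2 (cid (exists_far_coord g))). Qed.

Definition far_coords := range far_coord.

Definition far_span j := [set x | exists g v f,
  [/\ far_coord g = j, span_below g v, in_c0 f, f j = 0 & x = v + T f]].

Definition far_image := [set x | exists f,
  [/\ in_c0 f, (forall i, ~ far_coords i -> f i = 0) & x = T f]].

Lemma span_below_far_span g : span_below g `<=` far_span (far_coord g).
Proof.
move=> v gv; exists g, v, (fun _ => 0); split => //; first exact: in_c0_0.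
by rewrite T0 ?addr0.
Qed.

Lemma far_span0 j : far_coords j -> far_span j 0.
Proof. by case=> g _ <-; apply: span_below_far_span; case: (span_below_subspace g). Qed.

Lemma far_span_subspace j : far_coords j -> linear_subspace (far_span j).
Proof.
move=> Jj; split; first exact: far_span0.
- move=> _ _ [g1 [v1 [f1 [<- g1v1 f1_c0 f1j ->]]]] [g2 [v2 [f2 [g2j g2v2 f2_c0 f2j ->]]]].
  have [g [gj g1g g2g]] : exists g, [/\ far_coord g = far_coord g1,
      span_below g1 `<=` span_below g & span_below g2 `<=` span_below g].
    have [lg12|eg12|lg21] := lt_trichotomy g1 g2.
    + by exists g2; split => //; apply: span_below_mono.
    + by exists g1; split => //; rewrite eg12.
    + by exists g1; split => //; apply: span_below_mono.
  exists g, (v1 + v2), (fun k => f1 k + f2 k); split => //.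
  + by case: (span_below_subspace g) => _ gD _; apply: gD; [apply: g1g|apply: g2g].
  + exact: in_c0D.
  + by rewrite f1j f2j addr0.
  + by rewrite TD // addrACA.
- move=> a _ [g [v [f [gj gv f_c0 fj ->]]]].
  exists g, (a *: v), (fun k => a * f k); split => //.
  + by case: (span_below_subspace g) => _ _ gZ; apply: gZ.
  + exact: in_c0Z.
  + by rewrite fj mulr0.
  + by rewrite TZ // scalerDr.
Qed.

Lemma far_image_subspace : linear_subspace far_image.
Proof.
split.
- by exists (fun _ => 0); split => //; [exact: in_c0_0|rewrite T0].
- move=> _ _ [f1 [f1_c0 f1J ->]] [f2 [f2_c0 f2J ->]].
  exists (fun k => f1 k + f2 k); split; first exact: in_c0D.
    by move=> i Ji; rewrite f1J // f2J // addr0.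
  by rewrite TD.
- move=> a _ [f [f_c0 fJ ->]]; exists (fun k => a * f k); split.
  + exact: in_c0Z.
  + by move=> i Ji; rewrite fJ // mulr0.
  + by rewrite TZ.
Qed.

Lemma far_image0 : far_image 0.
Proof. by case: far_image_subspace. Qed.

Lemma e_far_span i j : far_coords i -> i <> j -> far_span i (e j).
Proof.
case=> g _ <- ij; exists g, 0, \1_[set j]; split => //.
- by case: (span_below_subspace g).
- exact: in_c0_indic1.
- exact: indic1_neq.
- by rewrite add0r.
Qed.

Lemma e_far_image j : far_coords j -> far_image (e j).
Proof.
move=> Jj; exists \1_[set j]; split => //; first exact: in_c0_indic1.
by move=> i Ji; apply: indic1_neq => ij; apply: Ji; rewrite ij.
Qed.

Lemma delta_le_set_dist_e j : far_coords j -> delta <= set_dist (e j) (far_span j).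
Proof.
move=> Jj; apply: (le_set_dist (far_span0 Jj)) => _ [g [v [f [<- gv f_c0 fj ->]]]].
by rewrite opprD addrA; apply: far_coordP.
Qed.

Definition beta j := (set_dist (e j) (far_span j))^-1.

Lemma set_dist_e_gt0 j : far_coords j -> 0 < set_dist (e j) (far_span j).
Proof. by move=> Jj; apply: lt_le_trans (delta_le_set_dist_e Jj); exact: delta_gt0. Qed.

Lemma beta_gt0 j : far_coords j -> 0 < beta j.
Proof. by move=> Jj; rewrite invr_gt0 set_dist_e_gt0. Qed.

Lemma beta_le j : far_coords j -> beta j <= delta^-1.
Proof.
move=> Jj; rewrite lef_pV2 ?posrE ?set_dist_e_gt0 ?delta_gt0 //.
exact: delta_le_set_dist_e.
Qed.

Lemma beta_set_dist_e j : far_coords j -> beta j * set_dist (e j) (far_span j) = 1.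
Proof. by move=> Jj; rewrite mulVf // gt_eqF // set_dist_e_gt0. Qed.

Lemma beta_set_dist_le j x : far_coords j ->
  beta j * set_dist x (far_span j) <= delta^-1 * `|x|.
Proof.
move=> Jj; apply: ler_pM; [exact: ltW (beta_gt0 Jj)|exact: set_dist_ge0 (far_span0 Jj) _|
  exact: beta_le|exact: set_dist_le_norm (far_span0 Jj) _].
Qed.

Definition norm_terms x := [set set_dist x far_image] `|`
  [set beta j * set_dist x (far_span j) | j in far_coords].

Definition sq_norm x := sup (norm_terms x).

Lemma norm_term_le x r : norm_terms x r -> r <= (1 + delta^-1) * `|x|.
Proof.
have delta_ge0 : 0 <= delta^-1 by rewrite invr_ge0 ltW // delta_gt0.
rewrite mulrDl mul1r => -[->|[j Jj <-]].
  by apply: le_trans (set_dist_le_norm far_image0 x) _; rewrite lerDl mulr_ge0.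
by apply: le_trans (beta_set_dist_le x Jj) _; rewrite lerDr.
Qed.

Lemma norm_terms_has_sup x : has_sup (norm_terms x).
Proof.
split; first by exists (set_dist x far_image); left.
by exists ((1 + delta^-1) * `|x|) => r; apply: norm_term_le.
Qed.

Lemma le_sq_norm x r : norm_terms x r -> r <= sq_norm x.
Proof. by move=> xr; apply: sup_upper_bound (norm_terms_has_sup x) _ xr. Qed.

Lemma sq_norm_le x b : (forall r, norm_terms x r -> r <= b) -> sq_norm x <= b.
Proof. by apply: ge_sup; exists (set_dist x far_image); left. Qed.

Lemma set_dist_far_image_le x : set_dist x far_image <= sq_norm x.
Proof. by apply: le_sq_norm; left. Qed.

Lemma beta_set_dist_le_sq_norm x j : far_coords j ->
  beta j * set_dist x (far_span j) <= sq_norm x.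
Proof. by move=> Jj; apply: le_sq_norm; right; exists j. Qed.

Lemma sq_norm_ge0 x : 0 <= sq_norm x.
Proof. exact: le_trans (set_dist_ge0 far_image0 x) (set_dist_far_image_le x). Qed.

Lemma sq_normD x y : sq_norm (x + y) <= sq_norm x + sq_norm y.
Proof.
apply: sq_norm_le => r [->|[j Jj <-]].
  apply: le_trans (set_distD far_image0 far_image_subspace x y) _.
  by apply: lerD; apply: set_dist_far_image_le.
apply: le_trans (ler_wpM2l (ltW (beta_gt0 Jj))
  (set_distD (far_span0 Jj) (far_span_subspace Jj) x y)) _.
by rewrite mulrDr; apply: lerD; apply: beta_set_dist_le_sq_norm.
Qed.

Lemma sq_normZ (a : R) x : sq_norm (a *: x) = `|a| * sq_norm x.
Proof.
apply: (@homogeneous_of_le _ _ sq_norm) => [|{}a {}x]; first exact: sq_norm_ge0.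
apply: sq_norm_le => r [->|[j Jj <-]].
  rewrite (set_distZ far_image0 far_image_subspace).
  by rewrite ler_wpM2l // set_dist_far_image_le.
rewrite (set_distZ (far_span0 Jj) (far_span_subspace Jj)) mulrCA.
by rewrite ler_wpM2l // beta_set_dist_le_sq_norm.
Qed.

Lemma sq_norm_le_norm x : sq_norm x <= (1 + delta^-1) * `|x|.
Proof. exact/sq_norm_le/norm_term_le. Qed.

Lemma set_dist_T_far_span i f : far_coords i -> in_c0 f ->
  set_dist (T f) (far_span i) = `|f i| * set_dist (e i) (far_span i).
Proof.
move=> Ji f_c0; pose f' k := f k - f i * \1_[set i] k.
have f'_c0 : in_c0 f' by apply: in_c0B => //; apply: in_c0Z; apply: in_c0_indic1.
have -> : T f = f i *: e i + T f'.
  rewrite -(T_lin (f i) (in_c0_indic1 i) f'_c0); congr T.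
  by apply: funext => k; rewrite addrC subrK.
have HS := far_span_subspace Ji.
rewrite (set_dist_shift (far_span0 Ji) HS) ?(set_distZ (far_span0 Ji) HS) //.
case: Ji => g _ gi; exists g, 0, f'; split => //.
- by case: (span_below_subspace g).
- by rewrite /f' indic1_id mulr1 subrr.
- by rewrite add0r.
Qed.

Lemma coord_le_sq_norm x f i : far_coords i -> in_c0 f ->
  `|f i| <= sq_norm x + delta^-1 * `|x - T f|.
Proof.
move=> Ji f_c0; have HS := far_span_subspace Ji.
rewrite -[`|f i|]mulr1 -(beta_set_dist_e Ji) mulrCA -set_dist_T_far_span //.
rewrite {1}(_ : T f = x + (T f - x)); last by rewrite addrC subrK.
apply: le_trans (ler_wpM2l (ltW (beta_gt0 Ji)) (set_distD (far_span0 Ji) HS _ _)) _.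
rewrite mulrDr; apply: lerD; first exact: beta_set_dist_le_sq_norm.
by rewrite distrC; apply: beta_set_dist_le.
Qed.

(* Approximate x by some T f in far_image; the coordinates of f are then bounded
   through [coord_le_sq_norm], hence so is T f. *)
Lemma norm_le_sq_norm x : `|x| <= (1 + C + C / delta) * sq_norm x.
Proof.
have delta_gt0 := delta_gt0.
set q := 1 + C / delta; have q_gt0 : 0 < q by rewrite addr_gt0 // divr_gt0.
apply/ler_addgt0Pr => eps eps_gt0; have epsq_gt0 : 0 < eps / q by rewrite divr_gt0.
have [_ [f [f_c0 fJ ->]] xf] := set_dist_approx far_image0 x epsq_gt0.
have {}xf : `|x - T f| <= sq_norm x + eps / q.
  by apply: ltW; apply: lt_le_trans xf _; rewrite lerD2r set_dist_far_image_le.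
have Tf_le : `|T f| <= C * (sq_norm x + delta^-1 * (sq_norm x + eps / q)).
  apply: T_le => // i; have [Ji|nJi] := pselect (far_coords i).
    apply: le_trans (coord_le_sq_norm x Ji f_c0) _.
    by rewrite lerD2l ler_wpM2l // invr_ge0 ltW.
  have Nx_ge0 := sq_norm_ge0 x.
  by rewrite fJ // normr0 addr_ge0 // mulr_ge0 ?invr_ge0 ?addr_ge0 // ltW.
apply: le_trans (_ : `|x - T f| + `|T f| <= _).
  by have := ler_normD (x - T f) (T f); rewrite subrK.
apply: le_trans (lerD xf Tf_le) _; rewrite le_eqVlt; apply/orP; left; apply/eqP.
by rewrite /q; field; rewrite !gt_eqF ?addr_gt0.
Qed.

Lemma sq_norm_e j : far_coords j -> sq_norm (e j) = 1.
Proof.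
move=> Jj; apply/eqP; rewrite eq_le; apply/andP; split.
  apply: sq_norm_le => r [->|[i Ji <-]].
    by rewrite (set_dist_mem far_image0 (e_far_image Jj)).
  have [->|ij] := pselect (i = j); first by rewrite beta_set_dist_e.
  by rewrite (set_dist_mem (far_span0 Ji) (e_far_span Ji ij)) mulr0.
by rewrite -(beta_set_dist_e Jj); apply: beta_set_dist_le_sq_norm.
Qed.

(* Translating by s *: e j changes only the j-th term of the supremum. *)
Lemma sq_norm_add_e x j (s : R) : far_coords j -> set_dist x (far_span j) = 0 ->
  sq_norm (x + s *: e j) <= Num.max (sq_norm x) `|s|.
Proof.
move=> Jj xj; apply: sq_norm_le => r [->|[i Ji <-]].
  rewrite (set_dist_shift far_image0 far_image_subspace).
    by rewrite le_max set_dist_far_image_le.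
  by case: far_image_subspace => _ _; apply; apply: e_far_image.
have HS := far_span_subspace Ji.
have [ij|ij] := pselect (i = j); last first.
  rewrite (set_dist_shift (far_span0 Ji) HS); last first.
    by case: HS => _ _; apply; apply: e_far_span.
  by rewrite le_max beta_set_dist_le_sq_norm.
subst i; apply: le_trans (ler_wpM2l (ltW (beta_gt0 Jj))
  (set_distD (far_span0 Jj) HS _ _)) _.
rewrite xj add0r (set_distZ (far_span0 Jj) HS) mulrCA beta_set_dist_e //.
by rewrite mulr1 le_max lexx orbT.
Qed.

Lemma sq_norm_SQ : SQ_lt_cf sq_norm lt.
Proof.
move=> A A_sphere A_small.
have [level levelP] := choice _ approx_span_below.
have [g gP] := card_lt_cf_bounded level A_small.
have Jg : far_coords (far_coord g) by exists g.
have unit_shift x (s : R) : A x -> `|s| = 1 -> sq_norm (x + s *: e (far_coord g)) <= 1.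
  move=> Ax s1; apply: le_trans (sq_norm_add_e s Jg _) _; last first.
    by rewrite A_sphere // s1 maxxx.
  apply: (set_dist_eq0 (far_span0 Jg)) => eps /(levelP x) [v xv vx].
  by exists v => //; apply/span_below_far_span/(span_below_mono (gP x Ax)).
exists (e (far_coord g)); first exact: sq_norm_e.
move=> x Ax; split; first by rewrite -[e _]scale1r unit_shift ?normr1.
by rewrite -scaleN1r unit_shift ?normrN ?normr1.
Qed.

Lemma sq_norm_equivalent : equivalent_norm sq_norm.
Proof.
have delta_gt0 := delta_gt0.
split.
- move=> x Nx0; apply/normr0_eq0/eqP; rewrite eq_le normr_ge0 andbT.
  by have := norm_le_sq_norm x; rewrite Nx0 mulr0.
- exact: sq_normZ.
- exact: sq_normD.
- exists (1 + C + C / delta)^-1, (1 + delta^-1); split.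
  + by rewrite invr_gt0 !addr_gt0 // divr_gt0.
  + by rewrite addr_gt0 // invr_gt0.
  + move=> x; split; last exact: sq_norm_le_norm.
    by rewrite ler_pdivrMl ?norm_le_sq_norm // !addr_gt0 // divr_gt0.
Qed.

Lemma exists_SQ_renorming : exists N : X -> R, equivalent_norm N /\ SQ_lt_cf N lt.
Proof. by exists sq_norm; split; [exact: sq_norm_equivalent|exact: sq_norm_SQ]. Qed.

End Renorming.

Theorem theorem3p7 (R : realType) (K : Type) (lt : K -> K -> Prop)
    (X : completeNormedModType R) :
  initial_ordinal lt ->
  infinite_set [set: K] ->
  uncountable_cofinality lt ->
  density_char_eq X K ->
  contains_c0 X K ->
  exists N : X -> R, equivalent_norm N /\ SQ_lt_cf N lt.
Proof.
move=> [lt_wf lt_transitive lt_trichotomy lt_initial] K_infinite lt_uncountable_cf.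
move=> [[D D_dense DK] _] [T [c [C [c_gt0 C_gt0 T_lin T_le T_ge]]]].
have [k0 _] := infinite_setN0 K_infinite.
have [iota [_ iota_inj]] := card_le_injects_into k0 DK.
exact: (exists_SQ_renorming lt_wf lt_transitive lt_trichotomy lt_initial
  K_infinite lt_uncountable_cf c_gt0 C_gt0 T_lin T_le T_ge D_dense iota_inj).
Qed.
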